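(* Let $n\ge2$, $A\in\mathbb{R}^{n\times m}$, $B\in\mathbb{R}^{m\times n}$, and let $C$ be a cycle in the DSR$^{[2]}$ graph $G^{[2]}_{A,B}$. (i) If $C$ is direct and $\pi(C)=\{W',W''\}$, then $P(C)=P(W')P(W'')$. (ii) If $C$ is twisted, then $P(C)=-P(\pi(C))$.
   Context: DSR graphs: for $A\in\mathbb{R}^{n\times m}$, $B\in\mathbb{R}^{m\times n}$, $G_{A,B}$ is the signed bipartite digraph with S-vertices $S_1,\dots,S_n$ and R-vertices $R_1,\dots,R_m$, an arc $R_j\to S_i$ of sign $\mathrm{sign}(A_{ij})$ iff $A_{ij}\ne0$, an arc $S_i\to R_j$ of sign $\mathrm{sign}(B_{ji})$ iff $B_{ji}\ne0$, with antiparallel arcs of equal sign merged into an undirected edge. Walks traverse edges consistently with orientation (empty walks allowed); the sign of a walk is the product of the signs of its edges with multiplicity (empty walk: $+1$); for a walk $W$ of even length, its parity is $P(W)=(-1)^{|W|/2}\mathrm{sign}(W)$, where $|W|$ is the number of edges with multiplicity. A cycle is a nonempty closed walk with no repeated vertex except first$=$last. DSR$^{[2]}$ graph: $\overline{\mathbf L}^A\in\mathbb{R}^{\binom n2\times mn}$ has rows indexed by $(i,j)$, $i<j$, columns by $(k,l)$, $1\le k\le m$, $1\le l\le n$, with entries $A_{jk}$ if $l=i$, $-A_{ik}$ if $l=j$, $0$ otherwise; $\underline{\mathbf L}^B\in\mathbb{R}^{mn\times\binom n2}$ has $(k,l),(i,j)$ entry $B_{kj}$ if $l=i$, $-B_{ki}$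 if $l=j$, $0$ otherwise. $G^{[2]}_{A,B}:=G_{\overline{\mathbf L}^A,\underline{\mathbf L}^B}$, with S-vertices written $ij=ji$ and R-vertices $k^l$; an edge $(ij,k^l)$ exists only if $l\in\{i,j\}$. The projection $\pi$ sends an edge $(ij,k^j)$ to the edge $(S_i,R_k)$ of $G_{A,B}$ (same direction). Direct/twisted and $\pi(C)$: let $C$ have S-vertex sequence $a_1b_1,\dots,a_{T+1}b_{T+1}=a_1b_1$, and write the segment from $a_rb_r$ to $a_{r+1}b_{r+1}$ as $(a_rb_r,k^l,a_{r+1}b_{r+1})$ with $l$ the common index; its projection is a length-2 walk from $S_x$ to $S_y$, where $x$ is the element of $\{a_r,b_r\}$ other than $l$ and $y$ that of $\{a_{r+1},b_{r+1}\}$ other than $l$. Starting from empty walks at $S_{a_1}$ and $S_{b_1}$, for $r=1,\dots,T$ append the projected segment to whichever current walk ends at $S_x$. If the final walks $W',W''$ are both closed, $C$ is direct and $\pi(C)=\{W',W''\}$; otherwise $W'$, $W''$ go from $S_{a_1}$ to $S_{b_1}$ and back respectively (or vice versa), $C$ is twisted, and $\pi(C)=W'\sqcup W''$ is the closed walk obtained by traversing them in succession. *)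

From HB Require Import structures.
From mathcomp Require Import all_boot all_order all_algebra.
Set Implicit Arguments. Unset Strict Implicit. Unset Printing Implicit Defensive.
Import Order.TTheory GRing.Theory Num.Theory.
Local Open Scope ring_scope.

(* Generic DSR graph on S-vertex index type IS and R-vertex index type *)
(* IR, given by a : IS -> IR -> R (a s r = entry "A_{s r}", arc R_r -> S_s)*)
(* and b : IR -> IS -> R (b r s = entry "B_{r s}", arc S_s -> R_r).       *)
(* Vertices: inl s = S_s, inr r = R_r.                                   *)
(* Merging antiparallel arcs of equal sign into an undirected edge does  *)
(* not change which oriented steps are allowed nor their signs, so walks *)
(* are vertex sequences whose consecutive steps are arcs.                *)
Notation vtx IS IR := (IS + IR)%type.

Section DSR.
Variables (R : realFieldType) (IS IR : finType).
Variables (a : IS -> IR -> R) (b : IR -> IS -> R).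

Definition dsr_w (u v : vtx IS IR) : R :=
  match u, v with
  | inl s, inr r => b r s
  | inr r, inl s => a s r
  | _, _ => 0
  end.

Definition dsr_arc : rel (vtx IS IR) := fun u v => dsr_w u v != 0.

(* a walk is given by its start x and the list p of subsequent vertices; *)
(* its length |W| is size p                                            *)
Definition is_walk (x : vtx IS IR) (p : seq (vtx IS IR)) := path dsr_arc x p.

Definition is_cycle (x : vtx IS IR) (p : seq (vtx IS IR)) :=
  [&& p != [::], path dsr_arc x p, last x p == x & uniq p].

Definition walk_sign (x : vtx IS IR) (p : seq (vtx IS IR)) : R :=
  \prod_(e <- zip (x :: p) p) Num.sg (dsr_w e.1 e.2).

Definition parity (x : vtx IS IR) (p : seq (vtx IS IR)) : R :=
  (-1) ^+ (size p)./2 * walk_sign x p.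
End DSR.

Definition parityAB (R : realFieldType) (n m : nat)
  (A : 'M[R]_(n, m)) (B : 'M[R]_(m, n)) :=
  parity (fun (i : 'I_n) (k : 'I_m) => A i k) (fun (k : 'I_m) (i : 'I_n) => B k i).

(* DSR^[2] graph.  S-vertices: pairs ij with i < j; R-vertices: k^l,    *)
(* encoded as (k, l) : 'I_m * 'I_n.                                     *)
Notation pair2 n := {p : 'I_n * 'I_n | (p.1 < p.2)%N}.

Definition Lbar (R : realFieldType) (n m : nat) (A : 'M[R]_(n, m))
  (s : pair2 n) (kl : 'I_m * 'I_n) : R :=
  let i := (val s).1 in let j := (val s).2 in
  if kl.2 == i then A j kl.1 else if kl.2 == j then - A i kl.1 else 0.

Definition Lunder (R : realFieldType) (n m : nat) (B : 'M[R]_(m, n))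
  (kl : 'I_m * 'I_n) (s : pair2 n) : R :=
  let i := (val s).1 in let j := (val s).2 in
  if kl.2 == i then B kl.1 j else if kl.2 == j then - B kl.1 i else 0.

Definition is_cycle2 (R : realFieldType) (n m : nat)
  (A : 'M[R]_(n, m)) (B : 'M[R]_(m, n)) :=
  is_cycle (@Lbar R n m A) (@Lunder R n m B).

Definition parity2 (R : realFieldType) (n m : nat)
  (A : 'M[R]_(n, m)) (B : 'M[R]_(m, n)) :=
  parity (@Lbar R n m A) (@Lunder R n m B).

Definition other (n : nat) (s : pair2 n) (l : 'I_n) : 'I_n :=
  if (val s).1 == l then (val s).2 else (val s).1.

Notation walkAB n m := (vtx 'I_n 'I_m * seq (vtx 'I_n 'I_m))%type.

Definition wend (n m : nat) (W : walkAB n m) := last W.1 W.2.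

(* Projection procedure: cur is the current S-vertex a_r b_r of C, p the *)
(* remaining vertices of C; each segment (a_r b_r, k^l, a_{r+1} b_{r+1})  *)
(* projects to S_x -> R_k -> S_y, appended to whichever current walk ends *)
(* at S_x.                                                              *)
Fixpoint proj_walks (n m : nat) (cur : pair2 n)
  (p : seq (vtx (pair2 n) ('I_m * 'I_n))) (W1 W2 : walkAB n m)
  : walkAB n m * walkAB n m :=
  match p with
  | inr kl :: inl s' :: p' =>
      let x := other cur kl.2 in
      let y := other s' kl.2 in
      let seg := [:: inr kl.1; inl y] in
      if wend W1 == inl x then proj_walks s' p' (W1.1, W1.2 ++ seg) W2
      else proj_walks s' p' W1 (W2.1, W2.2 ++ seg)
  | _ => (W1, W2)
  end.

Definition proj_pair (n m : nat) (s0 : pair2 n)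
  (p : seq (vtx (pair2 n) ('I_m * 'I_n))) : walkAB n m * walkAB n m :=
  proj_walks s0 p (inl (val s0).1, [::]) (inl (val s0).2, [::]).

Definition is_direct (n m : nat) (s0 : pair2 n)
  (p : seq (vtx (pair2 n) ('I_m * 'I_n))) : bool :=
  let W := proj_pair s0 p in
  (wend W.1 == W.1.1) && (wend W.2 == W.2.1).

Definition is_twisted (n m : nat) (s0 : pair2 n)
  (p : seq (vtx (pair2 n) ('I_m * 'I_n))) : bool := ~~ is_direct s0 p.

Definition walk_cat (n m : nat) (W1 W2 : walkAB n m) : walkAB n m :=
  (W1.1, W1.2 ++ W2.2).

(* Write eps(s, l) = +1 or -1 according as l is the smaller or the larger index
   of the pair s.  A segment (ab, k^l, a'b') of C has the sign of its projection
   S_x -> R_k -> S_y times eps(ab, l) eps(a'b', l).  Keeping track of the index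
   l1 of the current S-vertex at which W' ends, these factors telescope: the
   quantity P(W') P(W'') eps(ab, l1) is multiplied by the parity of each segment
   as it is traversed (both C and one projected walk gain two steps, so the
   factors (-1)^(|W|/2) match).  After the whole cycle, W' ends at a_1 (direct)
   or at b_1 (twisted), which gives P(C) = P(W') P(W'') or -P(W') P(W''); in the
   twisted case |W'| is even, so P(W') P(W'') = P(W' ⊔ W''). *)

From mathcomp Require Import all_boot all_order all_algebra.
From mathcomp Require Import ring.
Import GRing.Theory Num.Theory.
Set Implicit Arguments. Unset Strict Implicit.
Local Open Scope ring_scope.

Section WalkParity.
Variables (R : realFieldType) (IS IR : finType).
Variables (a : IS -> IR -> R) (b : IR -> IS -> R).

Local Notation sgw u v := (Num.sg (dsr_w a b u v)).

Lemma walk_sign_nil x : walk_sign a b x [::] = 1.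
Proof. by rewrite /walk_sign big_nil. Qed.

Lemma walk_sign_cons x y p :
  walk_sign a b x (y :: p) = sgw x y * walk_sign a b y p.
Proof. by rewrite /walk_sign big_cons. Qed.

Lemma walk_sign_cat x p q :
  walk_sign a b x (p ++ q) = walk_sign a b x p * walk_sign a b (last x p) q.
Proof.
elim: p x => [|y p IHp] x /=; first by rewrite walk_sign_nil mul1r.
by rewrite !walk_sign_cons IHp mulrA.
Qed.

Lemma parity_nil x : parity a b x [::] = 1.
Proof. by rewrite /parity walk_sign_nil mulr1. Qed.

Lemma parity_cat x p q : ~~ odd (size p) ->
  parity a b x (p ++ q) = parity a b x p * parity a b (last x p) q.
Proof.
move=> /negbTE even_p; rewrite /parity size_cat halfD even_p add0n.
by rewrite walk_sign_cat exprD mulrACA.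
Qed.

Lemma parity_rcons2 x p u v :
  parity a b x (p ++ [:: u; v]) =
    - parity a b x p * (sgw (last x p) u * sgw u v).
Proof.
rewrite /parity walk_sign_cat size_cat addn2 /= exprS.
by rewrite !walk_sign_cons walk_sign_nil mulr1; ring.
Qed.

Lemma parity_pair x u v : parity a b x [:: u; v] = - (sgw x u * sgw u v).
Proof. by rewrite -[[:: u; v]]cat0s parity_rcons2 parity_nil mulN1r. Qed.

End WalkParity.

Section Pairs.
Variable n : nat.
Implicit Types (s : pair2 n) (l : 'I_n).

Definition in_pair s l := (l == (val s).1) || (l == (val s).2).

Lemma pair_neq s : ((val s).1 == (val s).2) = false.
Proof. by apply/negbTE; rewrite neq_ltn (valP s). Qed.

Lemma pair_neq_sym s : ((val s).2 == (val s).1) = false.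
Proof. by rewrite eq_sym pair_neq. Qed.

Lemma in_pair_fst s : in_pair s (val s).1.
Proof. by rewrite /in_pair eqxx. Qed.

Lemma other_fst s : other s (val s).1 = (val s).2.
Proof. by rewrite /other eqxx. Qed.

Lemma in_pair_other s l : in_pair s (other s l).
Proof. by rewrite /in_pair /other; case: ifP; rewrite eqxx ?orbT. Qed.

Lemma otherK s l : in_pair s l -> other s (other s l) = l.
Proof.
rewrite /in_pair /other.
by case/orP=> /eqP ->; rewrite ?(eqxx, pair_neq, pair_neq_sym).
Qed.

Lemma in_pair_other_eq s l l' :
  in_pair s l -> in_pair s l' -> l' != other s l -> l' = l.
Proof.
rewrite /in_pair /other => /orP[] /eqP-> /orP[] /eqP->;
  by rewrite ?(eqxx, pair_neq, pair_neq_sym).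
Qed.

End Pairs.

Section PairSign.
Context {R : pzRingType} {n : nat}.
Implicit Types (s : pair2 n) (l : 'I_n).

(* eps(s, l): up to this sign, the entries of [Lbar A] and [Lunder B] at
   [s], [(k, l)] are entries of [A] and [B] (see [sgr_Lbar], [sgr_Lunder]). *)
Definition pair_sign s l : R := if l == (val s).1 then 1 else -1.

Lemma pair_sign_other s l :
  in_pair s l -> pair_sign s (other s l) = - pair_sign s l.
Proof.
rewrite /in_pair /pair_sign /other.
by case/orP=> /eqP ->; rewrite ?(eqxx, pair_neq, pair_neq_sym) ?opprK.
Qed.

Lemma pair_signM s l : pair_sign s l * pair_sign s l = 1.
Proof. by rewrite /pair_sign; case: ifP; rewrite ?mulrNN mulr1. Qed.

End PairSign.

Section CompoundEntries.
Context {R : realFieldType} {n m : nat} {A : 'M[R]_(n, m)} {B : 'M[R]_(m, n)}.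
Implicit Types (s : pair2 n) (k : 'I_m) (l : 'I_n).

Lemma in_pair_Lunder k l s : Lunder B (k, l) s != 0 -> in_pair s l.
Proof.
apply: contraNT; rewrite /in_pair negb_or /Lunder /=.
by case/andP=> /negbTE-> /negbTE->.
Qed.

Lemma in_pair_Lbar k l s : Lbar A s (k, l) != 0 -> in_pair s l.
Proof.
apply: contraNT; rewrite /in_pair negb_or /Lbar /=.
by case/andP=> /negbTE-> /negbTE->.
Qed.

Lemma sgr_Lunder k l s : in_pair s l ->
  Num.sg (Lunder B (k, l) s) = pair_sign s l * Num.sg (B k (other s l)).
Proof.
rewrite /in_pair /pair_sign /Lunder /other /=.
by case/orP=> /eqP ->; rewrite ?(eqxx, pair_neq, pair_neq_sym) ?sgrN ?mul1r ?mulN1r.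
Qed.

Lemma sgr_Lbar k l s : in_pair s l ->
  Num.sg (Lbar A s (k, l)) = pair_sign s l * Num.sg (A (other s l) k).
Proof.
rewrite /in_pair /pair_sign /Lbar /other /=.
by case/orP=> /eqP ->; rewrite ?(eqxx, pair_neq, pair_neq_sym) ?sgrN ?mul1r ?mulN1r.
Qed.

End CompoundEntries.

Section Projection.
Variables (R : realFieldType) (n m : nat).

Local Notation walks := (walkAB n m * walkAB n m)%type.
Implicit Types (cur se : pair2 n) (p : seq (vtx (pair2 n) ('I_m * 'I_n))).
Implicit Types (W : walkAB n m) (V : walks).

Definition proj_step cur (kl : 'I_m * 'I_n) (s' : pair2 n) W1 W2 : walks :=
  let seg := [:: inr kl.1; inl (other s' kl.2)] in
  if wend W1 == inl (other cur kl.2) then ((W1.1, W1.2 ++ seg), W2)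
  else (W1, (W2.1, W2.2 ++ seg)).

Lemma proj_walks_cons2 cur kl (s' : pair2 n) p W1 W2 :
  proj_walks cur [:: inr kl, inl s' & p] W1 W2 =
    proj_walks s' p (proj_step cur kl s' W1 W2).1 (proj_step cur kl s' W1 W2).2.
Proof. by rewrite /= /proj_step; case: ifP. Qed.

Lemma proj_walks_extend cur p W1 W2 :
  let P := proj_walks cur p W1 W2 in
  [/\ P.1.1 = W1.1, P.2.1 = W2.1,
      odd (size P.1.2) = odd (size W1.2) & odd (size P.2.2) = odd (size W2.2)].
Proof.
have [N] := ubnP (size p); elim: N => // N IH in p cur W1 W2 *.
case: p => [|[s1|kl] [|[s'|kl'] p]] // lt_p; try by split.
rewrite proj_walks_cons2 /=.
have [] := IH p s' (proj_step cur kl s' W1 W2).1 (proj_step cur kl s' W1 W2).2.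
  exact: ltnW.
by rewrite /proj_step; case: ifP => _ /= -> ->; rewrite size_cat oddD addbF => -> ->.
Qed.

Definition ends_on (s : pair2 n) (l : 'I_n) V :=
  [/\ in_pair s l, wend V.1 = inl l & wend V.2 = inl (other s l)].

Variables (A : 'M[R]_(n, m)) (B : 'M[R]_(m, n)).

Local Notation parityW W := (parityAB A B W.1 W.2).

Definition proj_parity V : R := parityW V.1 * parityW V.2.

Lemma parityW_rcons2 W x k y : wend W = inl x ->
  parityW (W.1, W.2 ++ [:: inr k; inl y]) =
    - parityW W * (Num.sg (B k x) * Num.sg (A y k)).
Proof. by move=> end_W; rewrite /parityAB parity_rcons2 -/(wend W) end_W. Qed.

Lemma wend_rcons2 W u v : wend (W.1, W.2 ++ [:: u; v]) = v.
Proof. by rewrite /wend last_cat. Qed.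

(* [pair_sign cur l] enters twice, through the entry of [Lunder B] and through
   the change of [l1], and cancels. *)
Lemma proj_step_parity cur k l s' l1 V :
  in_pair cur l -> in_pair s' l -> ends_on cur l1 V ->
  let V' := proj_step cur (k, l) s' V.1 V.2 in
  exists l1', ends_on s' l1' V' /\
    proj_parity V' * pair_sign s' l1' =
      parity2 A B (inl cur) [:: inr (k, l); inl s'] * proj_parity V * pair_sign cur l1.
Proof.
move=> l_cur l_s' [l1_cur end1 end2] /=.
rewrite /parity2 parity_pair /= sgr_Lunder // sgr_Lbar //.
rewrite /proj_step /= end1 /=; case: eqVneq => [[l1x] | l1x].
- exists (other s' l); split.
    split; rewrite ?wend_rcons2 ?in_pair_other //=.
    by rewrite end2 l1x !otherK.
  rewrite /proj_parity (parityW_rcons2 _ _ (etrans end1 (congr1 inl l1x))).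
  rewrite l1x !pair_sign_other // -[LHS]mul1r -(pair_signM cur l); ring.
- have l1l : l1 = l.
    by apply: in_pair_other_eq l_cur l1_cur _; apply: contraNneq l1x => ->.
  subst l1; exists l; split; first by split; rewrite ?wend_rcons2.
  rewrite /proj_parity /= (parityW_rcons2 _ _ end2).
  by rewrite -[LHS]mul1r -(pair_signM cur l); ring.
Qed.

Lemma proj_walks_parity p cur se l1 V :
  path (dsr_arc (Lbar A) (Lunder B)) (inl cur) p -> last (inl cur) p = inl se ->
  ends_on cur l1 V ->
  let V' := proj_walks cur p V.1 V.2 in
  exists l1', ends_on se l1' V' /\
    proj_parity V' * pair_sign se l1' =
      parity2 A B (inl cur) p * proj_parity V * pair_sign cur l1.
Proof.
have [N] := ubnP (size p); elim: N => // N IH in p cur l1 V *.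
case: p => [|[s1|[k l]] p] lt_p.
- by move=> _ [<-] end_V; exists l1; rewrite /parity2 parity_nil mul1r.
- by rewrite /= {1}/dsr_arc /= eqxx.
case: p lt_p => [|[s'|kl'] p] lt_p; last by rewrite /= {2}/dsr_arc /= eqxx andbF.
  by move=> _ [].
rewrite proj_walks_cons2 /= => /and3P[arc_l arc_s' path_p] last_p end_V.
have l_cur := in_pair_Lunder arc_l; have l_s' := in_pair_Lbar arc_s'.
have [l1' [end_V' eq_V']] := proj_step_parity k l_cur l_s' end_V.
have [l2 [end_V'' eq_V'']] := IH p _ _ _ (ltnW lt_p) path_p last_p end_V'.
have -> : parity2 A B (inl cur) [:: inr (k, l), inl s' & p] =
    parity2 A B (inl cur) [:: inr (k, l); inl s'] * parity2 A B (inl s') p.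
  by rewrite /parity2 -[[:: _, _ & p]]/([:: inr (k, l); inl s'] ++ p) parity_cat.
by exists l2; split=> //; rewrite eq_V'' -mulrA eq_V'; ring.
Qed.

End Projection.

Theorem proposition5p3 (R : realFieldType) (n m : nat)
  (A : 'M[R]_(n, m)) (B : 'M[R]_(m, n))
  (s0 : pair2 n) (p : seq (vtx (pair2 n) ('I_m * 'I_n))) :
  (2 <= n)%N ->
  is_cycle2 A B (inl s0) p ->
  (is_direct s0 p ->
     parity2 A B (inl s0) p =
       parityAB A B (proj_pair s0 p).1.1 (proj_pair s0 p).1.2 *
       parityAB A B (proj_pair s0 p).2.1 (proj_pair s0 p).2.2) /\
  (is_twisted s0 p ->
     parity2 A B (inl s0) p =
       - parityAB A B (walk_cat (proj_pair s0 p).1 (proj_pair s0 p).2).1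
                      (walk_cat (proj_pair s0 p).1 (proj_pair s0 p).2).2).
Proof.
(* [2 <= n] only says that [pair2 n] is inhabited, which [s0] already shows. *)
move=> _ /and4P[_ path_p /eqP last_p _].
pose V0 : walkAB n m * walkAB n m := ((inl (val s0).1, [::]), (inl (val s0).2, [::])).
have end_V0 : ends_on s0 (val s0).1 V0 by split; rewrite /= ?in_pair_fst ?other_fst.
have [l1 [[l1_s0 end1 end2] eq_P]] := proj_walks_parity path_p last_p end_V0.
have [start1 start2 even1 _] := proj_walks_extend s0 p V0.1 V0.2.
rewrite /V0 /= -/(proj_pair s0 p) in start1 start2 even1 end1 end2 eq_P.
rewrite /is_twisted /is_direct /walk_cat.
set P := proj_pair s0 p in end1 end2 eq_P start1 start2 even1 *.
have eq_C : parity2 A B (inl s0) p = proj_parity A B P * pair_sign s0 l1.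
  by rewrite eq_P /proj_parity /parityAB /= !parity_nil /pair_sign eqxx !mulr1.
split=> [/andP[/eqP closed1 _] | twisted].
  have [l1_fst] : inl l1 = inl (val s0).1 :> vtx 'I_n 'I_m.
    by rewrite -end1 closed1 start1.
  by rewrite eq_C l1_fst /pair_sign eqxx mulr1.
have l1_snd : l1 = (val s0).2.
  move: l1_s0; rewrite /in_pair => /orP[/eqP l1_fst | /eqP //].
  by case/negP: twisted; rewrite end1 end2 start1 start2 l1_fst other_fst !eqxx.
rewrite eq_C l1_snd /pair_sign pair_neq_sym mulrN1; congr (- _).
by rewrite /proj_parity /parityAB parity_cat ?even1 // -/(wend P.1) end1 l1_snd -start2.
Qed.
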